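(* For every integer $n \ge 5$, there exists an extremal point of $\Gamma(n)$ of rank $n$; hence $MR(n) \ge n$.
   Context: A state $\rho$ on $M_n(\mathbb{C}) \otimes M_n(\mathbb{C})$ is a marginal tracial state if $\rho(A\otimes I) = \mathrm{tr}(A)$ and $\rho(I \otimes B) = \mathrm{tr}(B)$ for all $A,B \in M_n(\mathbb{C})$, where $\mathrm{tr}$ is the normalized trace. $\Gamma(n)$ is the convex set of all marginal tracial states on $M_n(\mathbb{C}) \otimes M_n(\mathbb{C})$. For a state $\rho$, $\mathrm{rank}(\rho)$ is the rank of its density matrix. $MR(n)$ denotes the maximum of $\mathrm{rank}(\rho)$ over all extremal points $\rho$ of $\Gamma(n)$. *)

From HB Require Import structures.
From mathcomp Require Import all_boot all_order all_algebra.
Set Implicit Arguments. Unset Strict Implicit. Unset Printing Implicit Defensive.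
Import Order.TTheory GRing.Theory Num.Theory.
Local Open Scope ring_scope.
Local Open Scope sesquilinear_scope.

(* Decomposition of an index of C^n (x) C^n = C^(n*n) into a pair of indices
   (the same fixed bijection as the one underlying mxvec). *)
Definition tidx (n : nat) (k : 'I_(n * n)) : 'I_n * 'I_n :=
  enum_val (cast_ord (esym (mxvec_cast n n)) k).

Definition kron (C : numClosedFieldType) (n : nat) (A B : 'M[C]_n) : 'M[C]_(n * n) :=
  \matrix_(k, l) (A (tidx k).1 (tidx l).1 * B (tidx k).2 (tidx l).2).

Definition psd (C : numClosedFieldType) (m : nat) (M : 'M[C]_m) : Prop :=
  M ^t* = M /\ forall v : 'cV[C]_m, 0 <= ((v ^t* *m M *m v) 0 0).

(* Density matrix of a state on M_n(C) (x) M_n(C): the state is X |-> \tr (D X). *)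
Definition density (C : numClosedFieldType) (m : nat) (D : 'M[C]_m) : Prop :=
  psd D /\ \tr D = 1.

Definition ntr (C : numClosedFieldType) (n : nat) (A : 'M[C]_n) : C :=
  \tr A / n%:R.

(* D is (the density matrix of) an element of Gamma(n): a marginal tracial state. *)
Definition in_Gamma (C : numClosedFieldType) (n : nat) (D : 'M[C]_(n * n)) : Prop :=
  density D /\
  (forall A : 'M[C]_n, \tr (D *m kron A 1%:M) = ntr A) /\
  (forall B : 'M[C]_n, \tr (D *m kron 1%:M B) = ntr B).

Definition extremal_Gamma (C : numClosedFieldType) (n : nat) (D : 'M[C]_(n * n)) : Prop :=
  in_Gamma D /\
  forall (D1 D2 : 'M[C]_(n * n)) (t : C),
    in_Gamma D1 -> in_Gamma D2 -> 0 < t -> t < 1 ->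
    D = t *: D1 + (1 - t) *: D2 -> D1 = D /\ D2 = D.

From HB Require Import structures.
From mathcomp Require Import all_boot all_order all_algebra ring.
Set Implicit Arguments. Unset Strict Implicit. Unset Printing Implicit Defensive.
Import Order.TTheory GRing.Theory Num.Theory.
Local Open Scope ring_scope.
Local Open Scope sesquilinear_scope.

(* Write n = m + 2, index C^n by 0, ..., m + 1 and put e_ab := e_a (x) e_b,
     v_0 := sum_(a <> 0) e_aa,      v_k := e_0k + e_k0   (k <> 0),
     D := beta (m |v_0><v_0| + sum_(k <> 0) |v_k><v_k|),   beta := 1 / (n (n - 1)).
   The v_k have pairwise disjoint supports, so D has rank n once m > 0, and a
   direct count shows that both partial traces of D are I / n.  If D is a proper
   convex combination of D1, D2 in Gamma(n), then the positive semidefinite D1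
   vanishes on the kernel of D, hence D1 = sum_kl G_kl |v_k><v_l|.  For k <> l
   some off-diagonal entry of the first partial trace of D1 is exactly G_kl, so
   G_kl = 0; and the diagonal of the second partial trace is a nonsingular linear
   system in the G_kk, solved by the weights of D. *)

Definition pidx (n : nat) (x : 'I_n * 'I_n) : 'I_(n * n) :=
  cast_ord (mxvec_cast n n) (enum_rank x).

Lemma tidxK n : cancel (@tidx n) (@pidx n).
Proof. by move=> p; rewrite /pidx /tidx enum_valK cast_ordKV. Qed.

Lemma pidxK n : cancel (@pidx n) (@tidx n).
Proof. by move=> x; rewrite /pidx /tidx cast_ordK enum_rankK. Qed.

Lemma sum_pidx (R : nmodType) n (F : 'I_(n * n) -> R) :
  \sum_p F p = \sum_a \sum_b F (pidx (a, b)).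
Proof.
rewrite (reindex (@pidx n)) /=; last by exists (@tidx n) => x _; rewrite ?pidxK ?tidxK.
by rewrite pair_big; apply: eq_bigr => -[a b].
Qed.

Section PartialTrace.
Variables (C : numClosedFieldType) (n : nat).
Implicit Types (M : 'M[C]_(n * n)) (A B T : 'M[C]_n).

Lemma kronE A B a b a' b' :
  kron A B (pidx (a, b)) (pidx (a', b')) = A a a' * B b b'.
Proof. by rewrite /kron mxE !pidxK. Qed.

Definition ptr1 M : 'M[C]_n := \matrix_(b, b') \sum_a M (pidx (a, b)) (pidx (a, b')).
Definition ptr2 M : 'M[C]_n := \matrix_(a, a') \sum_b M (pidx (a, b)) (pidx (a', b)).

Lemma mxtrace_ptr2 M : \tr M = \tr (ptr2 M).
Proof. by rewrite /mxtrace sum_pidx; apply: eq_bigr => a _; rewrite mxE. Qed.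

Lemma mxtrace_mul_kron M A B : \tr (M *m kron A B) =
  \sum_a \sum_b \sum_a' \sum_b' M (pidx (a, b)) (pidx (a', b')) * (A a' a * B b' b).
Proof.
rewrite /mxtrace sum_pidx; apply: eq_bigr => a _; apply: eq_bigr => b _.
by rewrite mxE sum_pidx; do 2!apply: eq_bigr => ? _; rewrite kronE.
Qed.

Lemma mxtrace_mul_kron1 M A : \tr (M *m kron A 1%:M) = \tr (ptr2 M *m A).
Proof.
rewrite mxtrace_mul_kron /mxtrace; apply: eq_bigr => a _; rewrite mxE exchange_big.
apply: eq_bigr => a' _; rewrite mxE mulr_suml; apply: eq_bigr => b _.
rewrite (bigD1 b) //= big1 => [|b' /negbTE nb]; last by rewrite mxE nb !mulr0.
by rewrite mxE eqxx mulr1 addr0.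
Qed.

Lemma mxtrace_mul_1kron M B : \tr (M *m kron 1%:M B) = \tr (ptr1 M *m B).
Proof.
rewrite mxtrace_mul_kron exchange_big /mxtrace; apply: eq_bigr => b _; rewrite mxE.
rewrite (eq_bigr (fun a => \sum_b' M (pidx (a, b)) (pidx (a, b')) * B b' b)).
  rewrite exchange_big; apply: eq_bigr => b' _; rewrite mxE mulr_suml.
  by apply: eq_bigr.
move=> a _; rewrite (bigD1 a) //= [X in _ + X]big1 => [|a' /negbTE na].
  by rewrite addr0; apply: eq_bigr => b' _; rewrite mxE eqxx mul1r.
by rewrite big1 // => b' _; rewrite mxE na mul0r mulr0.
Qed.

Lemma mxtrace_mul_delta T i j : \tr (T *m delta_mx i j) = T j i.
Proof.
have entry k l : (T *m delta_mx i j) k l = T k i * (j == l)%:R.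
  rewrite mxE (bigD1 i) //= big1 => [|r /negbTE ri]; last by rewrite mxE ri /= mulr0.
  by rewrite mxE eqxx addr0 eq_sym.
rewrite /mxtrace (bigD1 j) //= big1 => [|k /negbTE nk]; last by rewrite entry eq_sym nk mulr0.
by rewrite entry eqxx mulr1 addr0.
Qed.

Lemma mxtrace_mul_ntrP T :
  (forall A, \tr (T *m A) = ntr A) <-> T = (n%:R^-1)%:M.
Proof.
split=> [hT | -> A]; last by rewrite mul_scalar_mx mxtraceZ /ntr mulrC.
apply/matrixP => i j; rewrite -mxtrace_mul_delta hT /ntr.
by rewrite -[delta_mx _ _]mul1mx mxtrace_mul_delta !mxE eq_sym mulrC mulr_natr.
Qed.

Lemma in_GammaE M :
  in_Gamma M <-> [/\ density M, ptr2 M = (n%:R^-1)%:M & ptr1 M = (n%:R^-1)%:M].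
Proof.
have e2 := mxtrace_mul_ntrP (ptr2 M); have e1 := mxtrace_mul_ntrP (ptr1 M).
split=> [[dM [h2 h1]] | [dM /e2 h2 /e1 h1]].
  split=> //; [apply/e2 | apply/e1] => A;
    by rewrite -?mxtrace_mul_kron1 -?mxtrace_mul_1kron.
by split=> //; split=> A; rewrite ?mxtrace_mul_kron1 ?mxtrace_mul_1kron.
Qed.

End PartialTrace.

Section Semidefinite.
Variable C : numClosedFieldType.

Lemma conj_affine_ge0_eq0 (z q : C) : 0 <= q ->
  (forall c, 0 <= c * z^* + c^* * z + c^* * c * q) -> z = 0.
Proof.
move=> q_ge0 hc; set t := (q + 1)^-1.
have t_gt0 : 0 < t by rewrite invr_gt0 ltr_wpDl.
have tq_lt2 : t * q < 2.
  rewrite (@le_lt_trans _ _ 1) ?ltr1n // /t mulrC ler_pdivrMr ?ltr_wpDl //.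
  by rewrite mul1r lerDl.
have := hc (- (t * z)); rewrite rmorphN rmorphM /= (geC0_conj (ltW t_gt0)).
have -> : - (t * z) * z^* + - (t * z^*) * z + - (t * z^*) * - (t * z) * q =
          - (z * z^* * (t * (2 - t * q))) by ring.
rewrite oppr_ge0 pmulr_lle0 ?mulr_gt0 ?subr_gt0 // => zz_le0.
by apply/eqP; rewrite -mul_conjC_eq0 eq_le zz_le0 mul_conjC_ge0.
Qed.

Definition form n (M : 'M[C]_n) (x y : 'cV[C]_n) : C := (x^t* *m M *m y) 0 0.

Lemma trmxC_mul m n p (A : 'M[C]_(m, n)) (B : 'M[C]_(n, p)) :
  (A *m B)^t* = B^t* *m A^t*.
Proof. by rewrite trmx_mul map_mxM. Qed.

Lemma form_addZr n (M : 'M[C]_n) (w e : 'cV[C]_n) (c : C) :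
  form M (w + c *: e) (w + c *: e) =
  form M w w + c * form M w e + c^* * form M e w + c^* * c * form M e e.
Proof.
rewrite /form; have -> : (w + c *: e)^t* = w^t* + c^* *: e^t*.
  by apply/matrixP => i j; rewrite !mxE rmorphD rmorphM.
rewrite !mulmxDl !mulmxDr -!scalemxAl -!scalemxAr !mxE.
by rewrite !addrA mulrA.
Qed.

Lemma form_conj n (M : 'M[C]_n) (x y : 'cV[C]_n) : M^t* = M ->
  form M y x = (form M x y)^*.
Proof.
move=> hM; rewrite /form.
have -> : (form M x y)^* = ((x^t* *m M *m y)^t*) 0 0 by rewrite /form !mxE.
by rewrite !trmxC_mul trmxCK hM mulmxA.
Qed.

Lemma form_delta n (M : 'M[C]_n) (x : 'cV[C]_n) i : form M (delta_mx i 0) x = (M *m x) i 0.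
Proof.
rewrite /form; have -> : (delta_mx i 0 : 'cV[C]_n)^t* = delta_mx 0 i.
  by rewrite trmx_delta map_delta_mx.
by rewrite -mulmxA -rowE mxE.
Qed.

Lemma mul_delta_col n (M : 'M[C]_n) (i j : 'I_n) : (M *m (delta_mx j 0 : 'cV_n)) i 0 = M i j.
Proof. by rewrite -colE mxE. Qed.

Lemma psd_form_eq0 n (M : 'M[C]_n) w : psd M -> form M w w = 0 -> M *m w = 0.
Proof.
move=> [hM M_ge0] w0; apply/matrixP => i j; rewrite ord1 [RHS]mxE.
set e : 'cV[C]_n := delta_mx i 0.
apply: (@conj_affine_ge0_eq0 _ (form M e e)) => [|c]; first exact: M_ge0.
have := M_ge0 (w + c *: e); rewrite -/(form M _ _) form_addZr w0 add0r.
by rewrite (form_conj e) // form_delta.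
Qed.

Lemma form_convex n (A B : 'M[C]_n) t s w :
  form (t *: A + s *: B) w w = t * form A w w + s * form B w w.
Proof. by rewrite /form mulmxDr mulmxDl -!scalemxAr -!scalemxAl !mxE. Qed.

Lemma psd_convex_form_eq0 n (D1 D2 : 'M[C]_n) t w : psd D1 -> psd D2 -> 0 < t -> t < 1 ->
  form (t *: D1 + (1 - t) *: D2) w w = 0 -> D1 *m w = 0.
Proof.
move=> psd1 psd2 t_gt0 t_lt1; rewrite form_convex => /eqP.
have [[_ D1_ge0] [_ D2_ge0]] := (psd1, psd2).
rewrite paddr_eq0 ?mulr_ge0 ?subr_ge0 ?D1_ge0 ?D2_ge0 ?(ltW t_gt0) ?(ltW t_lt1) //.
by rewrite mulf_eq0 gt_eqF //= => /andP[/eqP/(psd_form_eq0 psd1)].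
Qed.

Lemma psd_mul_diag n k (V : 'M[C]_(n, k)) (d : 'rV[C]_k) : (forall i, 0 <= d 0 i) ->
  psd (V *m diag_mx d *m V^t*).
Proof.
move=> d_ge0; split.
  rewrite !trmxC_mul trmxCK mulmxA; congr (_ *m _ *m _).
  apply/matrixP => i j; rewrite !mxE eq_sym; case: eqP => [->|_]; last by rewrite rmorph0.
  by rewrite !mulr1n geC0_conj.
move=> v; rewrite -!mulmxA mulmxA -[V^t* *m v]trmxCK trmxC_mul trmxCK mulmxA mxE.
by apply: sumr_ge0 => i _; rewrite mul_mx_diag !mxE mulrAC mulr_ge0 ?mul_conjC_ge0.
Qed.

End Semidefinite.

Section Colouring.
Variable m : nat.
Local Notation N := m.+2.
Implicit Types (a b k l : 'I_N) (x y : 'I_N * 'I_N).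

(* [in_supp x] says that e_x lies in the support of some v_k, and then
   [colour x] is that k; [rep k] is one point of the support of v_k. *)
Definition in_supp x : bool :=
  if x.1 == x.2 then x.1 != ord0 else (x.1 == ord0) || (x.2 == ord0).

Definition colour x : 'I_N :=
  if x.1 == ord0 then x.2 else if x.2 == ord0 then x.1 else ord0.

Definition rep k : 'I_N * 'I_N := if k == ord0 then (ord_max, ord_max) else (ord0, k).

Ltac case_ord0 := rewrite /in_supp /colour /=;
  do ![case: eqP => /= [?|?]; subst] => //; try congruence.

Lemma in_supp_swap a b : in_supp (b, a) = in_supp (a, b).
Proof. by case_ord0. Qed.

Lemma colour_swap a b : colour (b, a) = colour (a, b).
Proof. by case_ord0. Qed.

Lemma in_supp_rep k : in_supp (rep k).
Proof.
by rewrite /rep /in_supp; have [_|k0] := eqVneq k ord0; rewrite /= ?eqxx // eq_sym (negbTE k0).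
Qed.

Lemma colour_rep k : colour (rep k) = k.
Proof. by rewrite /rep /colour; have [->|k0] := eqVneq k ord0; rewrite /= ?eqxx ?(negbTE k0). Qed.

Lemma colour_inj_snd x y : in_supp x -> in_supp y ->
  colour x = colour y -> x.2 = y.2 -> x = y.
Proof. by case: x y => [a b] [a' b'] + + + /= eb; subst b'; case_ord0. Qed.

Lemma in_supp_same_row a a' b b' : b != b' ->
  in_supp (a, b) -> in_supp (a, b') -> in_supp (a', b) -> in_supp (a', b') -> a = a'.
Proof. by case_ord0. Qed.

Lemma colours_in_row k l : k != l -> exists a b b',
  [/\ in_supp (a, b), in_supp (a, b'), colour (a, b) = k & colour (a, b') = l].
Proof.
have [-> | k0] := eqVneq k ord0; first by exists l, l, ord0; case_ord0.
have [-> | l0] := eqVneq l ord0; first by exists k, ord0, k; case_ord0.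
by exists ord0, k, l; case_ord0.
Qed.

End Colouring.

Section ColourMatrix.
Variables (C : numClosedFieldType) (m : nat).
Local Notation N := m.+2.
Implicit Types (G : 'M[C]_N) (M : 'M[C]_(N * N)).

Definition incid : 'M[C]_(N * N, N) :=
  \matrix_(p, k) (in_supp (tidx p) && (colour (tidx p) == k))%:R.

(* The columns of [incid] are the v_k, so [colour_mx G] = sum_kl G_kl |v_k><v_l|. *)
Definition colour_mx G : 'M[C]_(N * N) := incid *m G *m incid^t*.

Definition select : 'M[C]_(N, N * N) := \matrix_(k, p) (p == pidx (rep k))%:R.

Definition compress M : 'M[C]_N := select *m M *m select^t*.

Lemma incidE x k : incid (pidx x) k = (in_supp x && (colour x == k))%:R.
Proof. by rewrite mxE pidxK. Qed.

Lemma colour_mxE G x y : colour_mx G (pidx x) (pidx y) =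
  if in_supp x && in_supp y then G (colour x) (colour y) else 0.
Proof.
have incidG z l : (incid *m G) (pidx z) l = if in_supp z then G (colour z) l else 0.
  rewrite mxE (bigD1 (colour z)) //= big1 => [|k /negbTE nk]; last first.
    by rewrite incidE eq_sym nk andbF mul0r.
  by rewrite incidE eqxx andbT addr0; case: in_supp; rewrite ?mul1r ?mul0r.
rewrite mxE (bigD1 (colour y)) //= big1 => [|l /negbTE nl]; last first.
  by rewrite !mxE pidxK eq_sym nl andbF conjC0 mulr0.
rewrite addr0 incidG [incid^t* _ _]mxE [incid^T _ _]mxE incidE eqxx andbT.
by case: (in_supp x); case: (in_supp y); rewrite /= ?conjC1 ?conjC0 ?mulr1 ?mulr0 ?mul0r.
Qed.

Lemma compressE M k l : compress M k l = M (pidx (rep k)) (pidx (rep l)).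
Proof.
have selM (A : 'M[C]_(N * N)) r q : (select *m A) r q = A (pidx (rep r)) q.
  rewrite mxE (bigD1 (pidx (rep r))) //= big1 => [|p /negbTE np]; last by rewrite mxE np mul0r.
  by rewrite mxE eqxx mul1r addr0.
rewrite mxE (bigD1 (pidx (rep l))) //= big1 => [|p /negbTE np]; last first.
  by rewrite !mxE np conjC0 mulr0.
by rewrite addr0 selM [select^t* _ _]mxE [select^T _ _]mxE mxE eqxx conjC1 mulr1.
Qed.

Lemma compress_colour_mx G : compress (colour_mx G) = G.
Proof.
by apply/matrixP => k l; rewrite compressE colour_mxE !in_supp_rep !colour_rep.
Qed.

Lemma mxrank_colour_mx G : \rank (colour_mx G) = \rank G.
Proof.
apply/eqP; rewrite eqn_leq; apply/andP; split.
  exact: leq_trans (mxrankM_maxl _ _) (mxrankM_maxr _ _).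
rewrite -{1}(compress_colour_mx G).
exact: leq_trans (mxrankM_maxl _ _) (mxrankM_maxr _ _).
Qed.

Definition colour_sum (g : 'I_N -> C) (a : 'I_N) : C :=
  \sum_b if in_supp (a, b) then g (colour (a, b)) else 0.

Lemma colour_sum0 g : colour_sum g ord0 = \sum_(b < m.+1) g (lift ord0 b).
Proof. by rewrite /colour_sum big_ord_recl /= add0r; apply: eq_bigr => b _. Qed.

Lemma colour_sum_neq0 g a : a != ord0 -> colour_sum g a = g ord0 + g a.
Proof.
move=> a0; rewrite /colour_sum (bigD1 a) //= (bigD1 ord0) 1?eq_sym //= big1.
  by rewrite /in_supp /colour /= !eqxx a0 (negbTE a0) /= addr0 addrC.
move=> b /andP[ba b0]; rewrite /in_supp /= eq_sym (negbTE ba).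
by rewrite (negbTE a0) (negbTE b0).
Qed.

Lemma colour_sum_inj g h : colour_sum g =1 colour_sum h -> g =1 h.
Proof.
move=> gh; pose d k := g k - h k.
have d_lift a : a != ord0 -> d a = - d ord0.
  move=> a0; apply/eqP; rewrite -addr_eq0 addrC /d addrACA -opprD subr_eq0.
  by rewrite -!colour_sum_neq0 ?gh.
have d0 : d ord0 = 0.
  have : \sum_(b < m.+1) d (lift ord0 b) = 0.
    by rewrite sumrB -!colour_sum0 gh subrr.
  rewrite (eq_bigr (fun _ => - d ord0)) => [|b _]; last by rewrite d_lift ?neq_lift.
  by rewrite sumr_const card_ord mulNrn => /eqP; rewrite oppr_eq0 mulrn_eq0 => /eqP.
move=> k; apply/eqP; rewrite -subr_eq0 -/(d k).
by have [->|k0] := eqVneq k ord0; last rewrite (d_lift _ k0) oppr_eq0; rewrite d0.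
Qed.

Lemma ptr2_colour_mx G a : ptr2 (colour_mx G) a a = colour_sum (fun k => G k k) a.
Proof. by rewrite mxE; apply: eq_bigr => b _; rewrite colour_mxE andbb. Qed.

End ColourMatrix.

Section ExtremeState.
Variables (C : numClosedFieldType) (m : nat).
Local Notation N := m.+2.
Local Notation colour_mx := (@colour_mx C m).

Definition beta : C := (N%:R * m.+1%:R)^-1.

Definition weight (k : 'I_N) : C := if k == ord0 then m%:R * beta else beta.

Definition Dext : 'M[C]_(N * N) := colour_mx (diag_mx (\row_k weight k)).

Lemma beta_gt0 : 0 < beta.
Proof. by rewrite invr_gt0 mulr_gt0 ?ltr0Sn. Qed.

Lemma succ_mul_beta : m.+1%:R * beta = N%:R^-1.
Proof. by rewrite /beta invfM mulrCA mulfV ?mulr1 ?pnatr_eq0. Qed.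

Lemma colour_sum_weight a : colour_sum weight a = N%:R^-1.
Proof.
have [->|a0] := eqVneq a ord0.
  rewrite colour_sum0 (eq_bigr (fun _ => beta)) => [|b _]; last first.
    by rewrite /weight eq_sym (negbTE (neq_lift _ _)).
  by rewrite sumr_const card_ord -[beta *+ _]mulr_natl succ_mul_beta.
by rewrite colour_sum_neq0 // /weight eqxx (negbTE a0) -{2}[beta]mul1r -mulrDl natr1 succ_mul_beta.
Qed.

Lemma DextE x y : Dext (pidx x) (pidx y) =
  if [&& in_supp x, in_supp y & colour x == colour y] then weight (colour x) else 0.
Proof.
rewrite colour_mxE mxE mxE; case: (in_supp x) (in_supp y) => [] [] //=.
by case: eqP.
Qed.

Lemma Dext_psd : psd Dext.
Proof.
apply: psd_mul_diag => k; rewrite mxE /weight; case: ifP => _; last exact: ltW beta_gt0.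
by rewrite mulr_ge0 ?ler0n ?ltW ?beta_gt0.
Qed.

Lemma ptr2_Dext : ptr2 Dext = (N%:R^-1)%:M.
Proof.
apply/matrixP => a a'; rewrite !mxE; have [<-|aa'] := eqVneq a a'.
  rewrite -(colour_sum_weight a) /colour_sum mulr1n; apply: eq_bigr => b _.
  by rewrite DextE eqxx andbT andbb.
rewrite mulr0n big1 // => b _; rewrite DextE.
case: and3P => // -[s1 s2 /eqP c12].
by have [] := colour_inj_snd s1 s2 c12 erefl; move/eqP: aa'.
Qed.

Lemma ptr1_Dext : ptr1 Dext = (N%:R^-1)%:M.
Proof.
rewrite -ptr2_Dext; apply/matrixP => b b'; rewrite !mxE; apply: eq_bigr => a _.
by rewrite !DextE (in_supp_swap a b) (in_supp_swap a b') (colour_swap a b) (colour_swap a b').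
Qed.

Lemma Dext_in_Gamma : in_Gamma Dext.
Proof.
apply/in_GammaE; split; [split | exact: ptr2_Dext | exact: ptr1_Dext].
  exact: Dext_psd.
by rewrite mxtrace_ptr2 ptr2_Dext mxtrace_scalar -[_ *+ N]mulr_natr mulVf ?pnatr_eq0.
Qed.

Lemma mxrank_Dext : (0 < m)%N -> \rank Dext = N.
Proof.
move=> m_gt0; rewrite mxrank_colour_mx; apply: mxrank_unit.
rewrite unitmxE det_diag unitfE; apply/prodf_neq0 => k _; rewrite mxE /weight.
by case: ifP => _; rewrite ?mulf_neq0 ?pnatr_eq0 -?lt0n ?gt_eqF ?beta_gt0.
Qed.

End ExtremeState.

Lemma extremal_Gamma_face (C : numClosedFieldType) n (D : 'M[C]_(n * n)) : in_Gamma D ->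
  (forall D1, in_Gamma D1 -> (forall w, form D w w = 0 -> D1 *m w = 0) -> D1 = D) ->
  extremal_Gamma D.
Proof.
move=> GD face; split=> // D1 D2 t G1 G2 t_gt0 t_lt1 eD.
have [[[psd1 _] _] [[psd2 _] _]] := (G1, G2).
split; apply: face => // w; rewrite eD; first exact: psd_convex_form_eq0.
rewrite -[t in t *: D1](subKr 1) addrC; apply: psd_convex_form_eq0 => //.
  by rewrite subr_gt0.
by rewrite ltrBlDr ltrDl.
Qed.

Section DextFace.
Variables (C : numClosedFieldType) (m : nat).
Local Notation N := m.+2.
Local Notation Dext := (@Dext C m).
Local Notation weight := (@weight C m).
Variable M : 'M[C]_(N * N).
Hypothesis M_Gamma : in_Gamma M.
Hypothesis M_ker : forall w, form Dext w w = 0 -> M *m w = 0.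

Lemma entry_conjC p q : M p q = (M q p)^*.
Proof. by have [[[herm _] _] _] := M_Gamma; rewrite -{1}herm !mxE. Qed.

Lemma ker_off_supp x p : ~~ in_supp x -> M p (pidx x) = 0.
Proof.
move=> sx; have := M_ker (w := delta_mx (pidx x) 0).
rewrite form_delta mul_delta_col DextE (negbTE sx) => /(_ erefl)/matrixP/(_ p 0).
by rewrite mul_delta_col mxE.
Qed.

Lemma ker_same_colour x y p : in_supp x -> in_supp y -> colour x = colour y ->
  M p (pidx x) = M p (pidx y).
Proof.
move=> sx sy cxy; have := M_ker (w := delta_mx (pidx x) 0 + (-1) *: delta_mx (pidx y) 0).
rewrite form_addZr !form_delta !mul_delta_col !DextE sx sy cxy eqxx /= rmorphN1.
rewrite mulrNN !mulN1r !mul1r subrr add0r addNr => /(_ erefl)/matrixP/(_ p 0).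
rewrite mulmxDr -scalemxAr mxE [X in _ + X]mxE !mul_delta_col [RHS]mxE mulN1r => /eqP.
by rewrite subr_eq0 => /eqP.
Qed.

Lemma colour_mx_compress : M = colour_mx (compress M).
Proof.
apply/matrixP => p q; rewrite -(tidxK p) -(tidxK q) colour_mxE compressE.
set x := tidx p; set y := tidx q.
case sx: (in_supp x); last by rewrite entry_conjC ker_off_supp ?sx ?conjC0.
case sy: (in_supp y); last by rewrite ker_off_supp ?sy.
rewrite (ker_same_colour _ sy (in_supp_rep _) (esym (colour_rep _))) entry_conjC.
by rewrite (ker_same_colour _ sx (in_supp_rep _) (esym (colour_rep _))) -entry_conjC.
Qed.

Lemma compress_offdiag k l : k != l -> compress M k l = 0.
Proof.
move=> kl; have [a [b [b' [s1 s2 c1 c2]]]] := colours_in_row kl.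
have bb' : b != b' by apply: contraNneq kl => eb; rewrite -c1 -c2 eb.
have [_ _ /matrixP/(_ b b')] := (in_GammaE M).1 M_Gamma.
rewrite [RHS]mxE (negbTE bb') mulr0n => <-; rewrite [RHS]mxE (bigD1 a) //= big1 => [|a' aa'].
  by rewrite addr0 [in RHS]colour_mx_compress colour_mxE s1 s2 c1 c2.
rewrite colour_mx_compress colour_mxE; case: andP => // -[s1' s2'].
by rewrite (in_supp_same_row bb' s1 s2 s1' s2') eqxx in aa'.
Qed.

Lemma compress_diag k : compress M k k = weight k.
Proof.
have [_ ptr2M _] := (in_GammaE M).1 M_Gamma.
apply: (@colour_sum_inj C m (fun k => compress M k k)) => a.
by rewrite -ptr2_colour_mx -colour_mx_compress ptr2M mxE eqxx mulr1n colour_sum_weight.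
Qed.

Lemma Dext_face : M = Dext.
Proof.
rewrite colour_mx_compress /Dext; congr colour_mx; apply/matrixP => k l.
rewrite [RHS]mxE [in RHS]mxE; have [<-|kl] := eqVneq k l; first by rewrite compress_diag.
by rewrite compress_offdiag.
Qed.

End DextFace.

Unset Implicit Arguments.
Theorem theorem2p7 (C : numClosedFieldType) (n : nat) (hn : (5 <= n)%N) :
  exists D : 'M[C]_(n * n), extremal_Gamma D /\ \rank D = n.
Proof.
case: n hn => [|[|m]] // hn; exists (Dext C m); split.
  by apply: extremal_Gamma_face; [exact: Dext_in_Gamma | exact: Dext_face].
by rewrite mxrank_Dext; case: m hn.
Qed.
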